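(* Let $\mathcal H$ be a Hilbert space, and let $a,b$ be operators on $\mathcal H$ together with a dense subspace $\mathcal D$ of $\mathcal H$ such that $a^\sharp\mathcal D\subseteq\mathcal D$ and $b^\sharp\mathcal D\subseteq\mathcal D$ (where $x^\sharp$ denotes $x$ or $x^\dagger$), and $abf-baf=f$ for all $f\in\mathcal D$. Assume there is a nonzero $\varphi_0\in\mathcal D$ with $a\varphi_0=0$, and set $\varphi_n=\frac{1}{\sqrt{n!}}b^n\varphi_0$, $n\ge 0$, and $\mathcal L_\varphi=\operatorname{span}\{\varphi_n:n\ge0\}$ (finite linear combinations). For $\gamma\in\mathbb C$ let $\sigma_1=e^{\gamma a}$ and $\sigma_2=e^{\gamma b}$ be defined as the series $\sigma_1 f=\sum_{k\ge0}\frac{(\gamma a)^k}{k!}f$ and $\sigma_2 f=\sum_{k\ge0}\frac{(\gamma b)^k}{k!}f$, with domain the set of vectors $f$ for which the series converges in $\mathcal H$. Then $D(\sigma_1)\supseteq\mathcal L_\varphi$. Moreover, if there exist $r_\varphi>0$ and $\alpha_\varphi\in[0,\tfrac12)$ with $\|\varphi_n\|\le r_\varphi^n(n!)^{\alpha_\varphi}$ for all $n\ge0$, then $D(\sigma_2)\supseteq\mathcal L_\varphi$.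
   Context: Standard facts in this setting: $a\varphi_0=0$, $a\varphi_n=\sqrt n\,\varphi_{n-1}$ for $n\ge1$, $b\varphi_n=\sqrt{n+1}\,\varphi_{n+1}$, and all $\varphi_n\in\mathcal D$. *)

From HB Require Import structures.
From mathcomp Require Import all_boot all_order all_algebra.
From mathcomp Require Import all_classical all_reals all_analysis.
From mathcomp Require Import complex Rstruct Rstruct_topology.
Set Implicit Arguments. Unset Strict Implicit. Unset Printing Implicit Defensive.
Import Order.TTheory GRing.Theory Num.Theory.
Import numFieldNormedType.Exports.
Local Open Scope classical_set_scope.
Local Open Scope ring_scope.

Notation RR := Rdefinitions.R.
Notation CC := (complex Rdefinitions.R).

Section Hilbert.
Variable H : completeNormedModType CC.

(* ip is an inner product on H (linear in the 2nd argument, conjugate-linear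
   in the first, physics convention) inducing the norm of H.  Together with
   completeness of H this makes H a (complex) Hilbert space. *)
Definition is_inner_product (ip : H -> H -> CC) : Prop :=
  [/\ (forall (x y z : H) (c : CC), ip x (c *: y + z) = c * ip x y + ip x z),
      (forall x y : H, ip y x = conjc (ip x y)) &
      (forall x : H, ip x x = `|x| ^+ 2)].

Definition lin_subspace (S : set H) : Prop :=
  S 0 /\ forall (c : CC) (x y : H), S x -> S y -> S (c *: x + y).

(* a (possibly unbounded) linear operator: a linear map a defined on the
   subspace S = D(a) (the values of the function a outside S are irrelevant) *)
Definition lin_op (S : set H) (a : H -> H) : Prop :=
  lin_subspace S /\
  forall (c : CC) (x y : H), S x -> S y -> a (c *: x + y) = c *: a x + a y.

Definition is_adjoint (ip : H -> H -> CC) (S : set H) (a : H -> H)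
    (Sad : set H) (ad : H -> H) : Prop :=
  (forall g : H, Sad g <-> exists h : H, forall f, S f -> ip g (a f) = ip h f) /\
  (forall g f : H, Sad g -> S f -> ip g (a f) = ip (ad g) f).

Definition phi_vec (b : H -> H) (phi0 : H) (n : nat) : H :=
  (sqrtC (n`!%:R : CC))^-1 *: iter n b phi0.

Definition span_phi (b : H -> H) (phi0 : H) : set H :=
  [set f | exists (N : nat) (c : nat -> CC),
             f = \sum_(n < N) c n *: phi_vec b phi0 n].

Definition exp_dom (S : set H) (x : H -> H) (gamma : CC) : set H :=
  [set f | (forall k : nat, S (iter k (fun v => gamma *: x v) f)) /\
           cvgn (series (fun k : nat =>
                   (k`!%:R : CC)^-1 *: iter k (fun v => gamma *: x v) f))].

End Hilbert.

From HB Require Import structures.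
From mathcomp Require Import all_boot all_order all_algebra.
From mathcomp Require Import all_classical all_reals all_analysis.
From mathcomp Require Import complex Rstruct Rstruct_topology.
From mathcomp Require Import ring lra zify.
Import Order.TTheory GRing.Theory Num.Theory.
Import numFieldNormedType.Exports.
Local Open Scope classical_set_scope.
Local Open Scope ring_scope.
Local Open Scope complex_scope.
Set Implicit Arguments. Unset Strict Implicit.

(* The commutation relation gives [a (b^(n+1) phi0) = (n+1) b^n phi0] on D, so
   (gamma a)^k annihilates phi_n as soon as k > n and the exponential series of
   e^(gamma a) is a finite sum on L_phi.  For e^(gamma b) the k-th term applied
   to phi_n is gamma^k sqrt((n+k)!/n!)/k! phi_(n+k); under the growth bound its
   norm is dominated by a real sequence whose ratio of consecutive terms is
   |gamma| r (n+k+1)^(1/2+alpha) / (k+1), which tends to 0 because alpha < 1/2.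
   The ratio test and completeness of H give convergence, and linearity extends
   both statements from the phi_n to their span. *)

Section LinearOnSubspace.
Variables (H : completeNormedModType CC) (D : set H).
Hypothesis DS : lin_subspace D.

Lemma lin_subspace0 : D 0.
Proof. by case: DS. Qed.

Lemma lin_subspaceZ c x : D x -> D (c *: x).
Proof.
by move=> Dx; rewrite -[_ *: _]addr0; apply: DS.2 => //; exact: lin_subspace0.
Qed.

Lemma lin_subspaceD x y : D x -> D y -> D (x + y).
Proof. by move=> Dx Dy; rewrite -[x]scale1r; apply: DS.2. Qed.

Lemma lin_subspace_sum N (c : nat -> CC) (x : nat -> H) :
  (forall i, D (x i)) -> D (\sum_(i < N) c i *: x i).
Proof.
move=> Dx; elim: N => [|N IH]; first by rewrite big_ord0; exact: lin_subspace0.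
by rewrite big_ord_recr /=; apply: lin_subspaceD => //; exact: lin_subspaceZ.
Qed.

Definition lin_endo (L : H -> H) : Prop :=
  (forall x, D x -> D (L x)) /\
  (forall (c : CC) x y, D x -> D y -> L (c *: x + y) = c *: L x + L y).

Lemma lin_op_endo S a :
  lin_op S a -> (forall f, D f -> S f /\ D (a f)) -> lin_endo a.
Proof.
move=> [_ aL] Da; split=> [x /Da[]//|c x y Dx Dy].
by apply: aL; [exact: (Da x Dx).1 | exact: (Da y Dy).1].
Qed.

Section LinearEndo.
Variable L : H -> H.
Hypothesis LD : lin_endo L.

Lemma lin_endo0 : L 0 = 0.
Proof.
have := LD.2 1 0 0 lin_subspace0 lin_subspace0.
by rewrite !scale1r !addr0 => /esym/eqP; rewrite -subr_eq0 addrK => /eqP.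
Qed.

Lemma lin_endoZ c x : D x -> L (c *: x) = c *: L x.
Proof.
by move=> Dx; have := LD.2 c x 0 Dx lin_subspace0; rewrite !addr0 lin_endo0 addr0.
Qed.

Lemma lin_endo_sum N (c : nat -> CC) (x : nat -> H) :
  (forall i, D (x i)) -> L (\sum_(i < N) c i *: x i) = \sum_(i < N) c i *: L (x i).
Proof.
move=> Dx; elim: N => [|N IH]; first by rewrite !big_ord0 lin_endo0.
rewrite !big_ord_recr /= addrC LD.2 ?IH 1?addrC //; exact: lin_subspace_sum.
Qed.

End LinearEndo.

Lemma lin_endo_iter L k : lin_endo L -> lin_endo (iter k L).
Proof.
move=> LD; elim: k => [|k [IHD IHL]] //=.
split=> [x Dx|c x y Dx Dy]; first by rewrite iterS; exact: LD.1 (IHD _ Dx).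
by rewrite !iterS IHL // LD.2 //; apply: IHD.
Qed.

Lemma lin_endo_scale L (g : CC) : lin_endo L -> lin_endo (fun v => g *: L v).
Proof.
move=> LD; split=> [x Dx|c x y Dx Dy]; first by apply: lin_subspaceZ; exact: LD.1.
by rewrite LD.2 // scalerDr !scalerA mulrC.
Qed.

Definition exp_series_term (L : H -> H) (g : CC) (f : H) : H ^nat :=
  fun k => (k`!%:R : CC)^-1 *: iter k (fun v => g *: L v) f.

Lemma exp_dom_cvg S L (g : CC) f :
  D `<=` S -> lin_endo L -> D f ->
  cvgn (series (exp_series_term L g f)) -> exp_dom S L g f.
Proof.
move=> DsubS LD Df cvg; split=> // k; apply: DsubS.
exact: (lin_endo_iter k (lin_endo_scale g LD)).1.
Qed.

End LinearOnSubspace.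

Section Creator.
Variables (H : completeNormedModType CC) (D : set H) (b : H -> H) (phi0 : H).
Hypotheses (DS : lin_subspace D) (bD : lin_endo D b) (Dphi0 : D phi0).

Lemma D_iter_creator n : D (iter n b phi0).
Proof. exact: (lin_endo_iter n bD).1. Qed.

Lemma D_phi_vec n : D (phi_vec b phi0 n).
Proof. exact: lin_subspaceZ (D_iter_creator n). Qed.

Lemma span_phi_sub : span_phi b phi0 `<=` D.
Proof. by move=> _ [N [c ->]]; apply: (lin_subspace_sum DS); exact: D_phi_vec. Qed.

Lemma iter_creator_phi_vec n :
  iter n b phi0 = sqrtC (n`!%:R) *: phi_vec b phi0 n.
Proof.
by rewrite /phi_vec scalerA mulfV ?scale1r // sqrtC_eq0 pnatr_eq0 -lt0n fact_gt0.
Qed.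

Lemma iter_scale_creator (g : CC) k n :
  iter k (fun v => g *: b v) (iter n b phi0) = g ^+ k *: iter (k + n) b phi0.
Proof.
elim: k => [|k IH]; first by rewrite scale1r.
by rewrite iterS /= IH (lin_endoZ DS bD _ (D_iter_creator _)) scalerA -exprS.
Qed.

End Creator.

Section Annihilator.
Variables (H : completeNormedModType CC) (D : set H) (a b : H -> H) (phi0 : H).
Hypotheses (DS : lin_subspace D) (aD : lin_endo D a) (bD : lin_endo D b).
Hypothesis ccr : forall f, D f -> a (b f) - b (a f) = f.
Hypotheses (Dphi0 : D phi0) (vacuum : a phi0 = 0).

Lemma annihilator_creator n : a (iter n.+1 b phi0) = n.+1%:R *: iter n b phi0.
Proof.
have abE f : D f -> a (b f) = f + b (a f).
  by move=> Df; apply/eqP; rewrite -subr_eq ccr.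
elim: n => [|n IH]; first by rewrite /= abE // vacuum (lin_endo0 DS bD) addr0 scale1r.
rewrite iterS abE ?IH ?(lin_endoZ DS bD _ (D_iter_creator bD Dphi0 _)) -?iterS;
  last exact: D_iter_creator.
by rewrite [in RHS]mulrS scalerDl scale1r.
Qed.

Lemma iter_annihilator_creator_eq0 (g : CC) n k : (n < k)%N ->
  iter k (fun v => g *: a v) (iter n b phi0) = 0.
Proof.
have AD k' := lin_endo_iter k' (lin_endo_scale DS g aD).
elim: n k => [|n IH] [|k] // ltnk; rewrite iterSr /=.
  by rewrite vacuum scaler0 (lin_endo0 DS (AD k)).
rewrite annihilator_creator scalerA.
by rewrite (lin_endoZ DS (AD k) _ (D_iter_creator bD Dphi0 _)) IH ?scaler0.
Qed.

Lemma iter_annihilator_span_eq0 (g : CC) N (c : nat -> CC) k : (N <= k)%N ->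
  iter k (fun v => g *: a v) (\sum_(n < N) c n *: phi_vec b phi0 n) = 0.
Proof.
move=> Nk; have AD := lin_endo_iter k (lin_endo_scale DS g aD).
rewrite (lin_endo_sum DS AD) => [|n]; last exact: D_phi_vec.
rewrite big1 // => n _.
rewrite /phi_vec (lin_endoZ DS AD _ (D_iter_creator bD Dphi0 _)).
by rewrite iter_annihilator_creator_eq0 ?scaler0 // (leq_trans (ltn_ord n) Nk).
Qed.

Lemma span_phi_sub_exp_dom_annihilator Sa (g : CC) :
  D `<=` Sa -> span_phi b phi0 `<=` exp_dom Sa a g.
Proof.
move=> DSa f spf; apply: (exp_dom_cvg DS DSa aD (span_phi_sub DS bD Dphi0 spf)).
case: spf => N [c ->]; rewrite -(is_cvg_series_restrict N).
rewrite (_ : [sequence _]_n = cst 0); first exact: is_cvg_cst.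
apply/funext => n; apply: big1_seq => k /andP[_]; rewrite mem_index_iota.
by move=> /andP[Nk _]; rewrite /exp_series_term iter_annihilator_span_eq0 ?scaler0.
Qed.

End Annihilator.

Lemma series_norm_le_cvg (V : completeNormedModType CC) (u : V ^nat) (w : RR ^nat) :
  (forall k, `|u k| <= (w k)%:C) -> cvgn (series w) -> cvgn (series u).
Proof.
move=> uw /cvg_cauchy /(@cauchy_seriesP RR RR^o w) wC.
apply/cauchy_cvgP/cauchy_seriesP => -[e y]; rewrite ltcE /= => /andP[/eqP -> e0].
apply: filterS (wC _ e0) => p wp.
apply: le_lt_trans (ler_norm_sum _ _ _) _.
apply: le_lt_trans (ler_sum _ (fun k _ => uw k)) _.
by rewrite -rmorph_sum ltcR (le_lt_trans (ler_norm _) wp).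
Qed.

Lemma series_ratio_half_cvg (R : realType) (w : R ^nat) K :
  (forall k, 0 <= w k) -> (forall k, (K <= k)%N -> w k.+1 <= w k / 2) ->
  cvgn (series w).
Proof.
move=> w0 wS.
pose C := \sum_(j < K.+1) w j * 2 ^+ j.
have wC_init k : (k <= K)%N -> w k * 2 ^+ k <= C.
  move=> kK; rewrite /C (bigD1 (Ordinal (kK : (k < K.+1)%N))) //= lerDl.
  by apply: sumr_ge0 => i _; rewrite mulr_ge0 ?exprn_ge0.
have wC k : w k * 2 ^+ k <= C.
  elim: k => [|k IH]; first exact: wC_init.
  have [kK|Kk] := leqP k.+1 K; first exact: wC_init.
  apply: le_trans IH; rewrite exprS mulrA ler_wpM2r ?exprn_ge0 //.
  by rewrite -ler_pdivlMr // wS.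
apply: (@series_le_cvg _ _ (geometric C 2^-1)) => // [n|n|].
- by rewrite mulr_ge0 ?exprn_ge0 ?invr_ge0 // (le_trans _ (wC 0)) ?mulr_ge0.
- by rewrite /= exprVn ler_pdivlMr ?exprn_gt0.
- by apply: is_cvg_geometric_series; rewrite ger0_norm ?invr_ge0 // invf_lt1 // ltr1n.
Qed.

Lemma mul_powR_le_id (R : realType) (E beta x : R) :
  0 < E -> beta < 1 -> powR E (1 - beta)^-1 <= x -> E * powR x beta <= x.
Proof.
move=> E0 beta1 Ex; have beta1' : 0 < 1 - beta by rewrite subr_gt0.
have x0 : 0 < x := lt_le_trans (powR_gt0 _ E0) Ex.
have Epow : E <= powR x (1 - beta).
  have -> : E = powR (powR E (1 - beta)^-1) (1 - beta).
    by rewrite -powRrM mulVf ?powRr1 ?(ltW E0) // gt_eqF.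
  by apply: (ge0_ler_powR (ltW beta1')); rewrite ?nnegrE ?powR_ge0 ?(ltW x0).
have xE : powR x (1 - beta) * powR x beta = x.
  by rewrite -powRD ?subrK ?powRr1 ?(ltW x0) // (gt_eqF x0) implybT.
by rewrite -[leRHS]xE ler_wpM2r ?powR_ge0.
Qed.

Lemma eventually_mul_powR_le_half (R : realType) (q beta : R) n :
  0 <= q -> beta < 1 ->
  exists K, forall k, (K <= k)%N -> q * powR ((k + n).+1%:R) beta <= k.+1%:R / 2.
Proof.
move=> q0 beta1; have E0 : 0 < 4 * q + 1 by lra.
pose X := powR (4 * q + 1) (1 - beta)^-1.
exists (maxn n (Num.bound X)) => k; rewrite geq_max => /andP[nk Xk].
have Xx : X <= (k + n).+1%:R.
  apply: le_trans (ltW (archi_boundP (powR_ge0 _ _))) _.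
  by rewrite ler_nat -/X; lia.
have := mul_powR_le_id E0 beta1 Xx.
have : (k + n).+1%:R <= 2 * k.+1%:R :> R by rewrite -natrM ler_nat; lia.
have := powR_ge0 ((k + n).+1%:R : R) beta.
nra.
Qed.

Lemma is_cvg_series_lincomb (K : numFieldType) (V : normedModType K) N
    (c : nat -> K) (u : nat -> V ^nat) :
  (forall i, cvgn (series (u i))) ->
  cvgn (series (fun k => \sum_(i < N) c i *: u i k)).
Proof.
move=> cu; elim: N => [|N IH].
  rewrite (_ : series _ = cst 0); first exact: is_cvg_cst.
  by apply/funext => n; rewrite /series /= big1 // => i _; rewrite big_ord0.
rewrite (_ : (fun k => _) = (fun k => \sum_(i < N) c i *: u i k) + c N *: u N).
  by rewrite seriesD seriesZ; apply: is_cvgD => //; exact: is_cvgZl_tmp.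
by apply/funext => k; rewrite big_ord_recr.
Qed.

Definition exp_creator_majorant (c r alpha : RR) (n k : nat) : RR :=
  c ^+ k / k`!%:R * Num.sqrt ((k + n)`!%:R) / Num.sqrt (n`!%:R) *
  (r ^+ (k + n) * powR ((k + n)`!%:R) alpha).

Lemma exp_creator_majorant_ge0 c r alpha n k :
  0 <= c -> 0 <= r -> 0 <= exp_creator_majorant c r alpha n k.
Proof.
by move=> c0 r0; rewrite !mulr_ge0 ?invr_ge0 ?sqrtr_ge0 ?exprn_ge0 ?powR_ge0.
Qed.

Lemma exp_creator_majorantS c r alpha n k :
  exp_creator_majorant c r alpha n k.+1 = exp_creator_majorant c r alpha n k *
    (c * r * powR ((k + n).+1%:R) (2^-1 + alpha) / k.+1%:R).
Proof.
rewrite /exp_creator_majorant addSn !factS !natrM invfM sqrtrM ?ler0n //.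
rewrite powRM ?ler0n // powRD ?pnatr_eq0 ?implybT // powR12_sqrt ?ler0n //.
by rewrite !exprS; ring.
Qed.

Lemma exp_creator_majorant_cvg c r alpha n :
  0 <= c -> 0 < r -> 0 <= alpha < 2^-1 ->
  cvgn (series (exp_creator_majorant c r alpha n)).
Proof.
move=> c0 r0 /andP[alpha0 alpha1].
have beta1 : 2^-1 + alpha < 1 by lra.
have [K HK] := eventually_mul_powR_le_half n (mulr_ge0 c0 (ltW r0)) beta1.
apply: (series_ratio_half_cvg (K := K)) => [k|k Kk].
  by apply: exp_creator_majorant_ge0 => //; exact: ltW.
rewrite exp_creator_majorantS ler_wpM2l ?exp_creator_majorant_ge0 ?(ltW r0) //.
by rewrite ler_pdivrMr ?ltr0n // [leRHS]mulrC; exact: HK.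
Qed.

Lemma sqrtC_natr (m : nat) : sqrtC (m%:R : CC) = (Num.sqrt (m%:R : RR))%:C.
Proof.
have -> : (m%:R : CC) = (Num.sqrt (m%:R : RR))%:C ^+ 2.
  by rewrite -rmorphXn sqr_sqrtr ?ler0n // rmorph_nat.
by rewrite sqrCK // ler0c sqrtr_ge0.
Qed.

Lemma complex_normr_real (R : rcfType) (g : R[i]) :
  exists2 c : R, 0 <= c & `|g| = c%:C.
Proof.
by case: g => x y; exists (Num.sqrt (x ^+ 2 + y ^+ 2)); rewrite ?sqrtr_ge0 ?normc_def.
Qed.

Section CreatorGrowth.
Variables (H : completeNormedModType CC) (D : set H) (b : H -> H) (phi0 : H).
Hypotheses (DS : lin_subspace D) (bD : lin_endo D b) (Dphi0 : D phi0).
Variables (r alpha : RR).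
Hypotheses (r0 : 0 < r) (alpha_bounds : 0 <= alpha < 2^-1).
Hypothesis phi_vec_growth :
  forall n, `|phi_vec b phi0 n| <= (r ^+ n * powR (n`!%:R) alpha)%:C.

Lemma norm_exp_creator_term_le (g : CC) (c : RR) n k : `|g| = c%:C ->
  `|exp_series_term b g (phi_vec b phi0 n) k|
    <= (exp_creator_majorant c r alpha n k)%:C.
Proof.
move=> normg; have BD := lin_endo_iter k (lin_endo_scale DS g bD).
rewrite /exp_series_term {1}/phi_vec (lin_endoZ DS BD _ (D_iter_creator bD Dphi0 _)).
rewrite (iter_scale_creator DS bD Dphi0) !scalerA iter_creator_phi_vec scalerA normrZ.
rewrite /exp_creator_majorant rmorphM.
apply: ler_pM; [exact: normr_ge0 | exact: normr_ge0 | | exact: phi_vec_growth].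
suff -> : `|(k`!%:R)^-1 / sqrtC (n`!%:R) * g ^+ k * sqrtC ((k + n)`!%:R)| =
    (c ^+ k / k`!%:R * Num.sqrt ((k + n)`!%:R) / Num.sqrt (n`!%:R))%:C by [].
rewrite !normrM !normrV ?unitfE ?sqrtC_eq0 ?pnatr_eq0 -?lt0n ?fact_gt0 //.
rewrite normrX normg normr_nat !sqrtC_natr !ger0_norm ?ler0c ?sqrtr_ge0 //.
by rewrite !rmorphM /= !fmorphV /= rmorphXn /= rmorph_nat; ring.
Qed.

Lemma exp_creator_phi_vec_cvg (g : CC) n :
  cvgn (series (exp_series_term b g (phi_vec b phi0 n))).
Proof.
have [c c0 normg] := complex_normr_real g.
apply: series_norm_le_cvg (fun k => norm_exp_creator_term_le n k normg) _.
exact: exp_creator_majorant_cvg.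
Qed.

Lemma span_phi_sub_exp_dom_creator Sb (g : CC) :
  D `<=` Sb -> span_phi b phi0 `<=` exp_dom Sb b g.
Proof.
move=> DSb f spf; apply: (exp_dom_cvg DS DSb bD (span_phi_sub DS bD Dphi0 spf)).
case: spf => N [c ->].
rewrite (_ : exp_series_term _ _ _ = fun k => \sum_(i < N) c i *:
    exp_series_term b g (phi_vec b phi0 i) k).
  exact: is_cvg_series_lincomb (fun i => exp_creator_phi_vec_cvg (g := g) (n := i)).
apply/funext => k; have BD := lin_endo_iter k (lin_endo_scale DS g bD).
rewrite /exp_series_term (lin_endo_sum DS BD) => [|i]; last exact: D_phi_vec.
by rewrite scaler_sumr; apply: eq_bigr => i _; rewrite !scalerA mulrC.
Qed.

End CreatorGrowth.

Unset Implicit Arguments.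
Set Strict Implicit.

Theorem mainTheorem1
  (H : completeNormedModType CC) (ip : H -> H -> CC)
  (Sa : set H) (a : H -> H) (Sb : set H) (b : H -> H)
  (Sad : set H) (ad : H -> H) (Sbd : set H) (bd : H -> H)
  (D : set H) (phi0 : H) (gamma : CC) :
  is_inner_product ip ->
  lin_subspace D -> closure D = setT ->
  lin_op Sa a -> lin_op Sb b ->
  is_adjoint ip Sa a Sad ad -> is_adjoint ip Sb b Sbd bd ->
  (forall f, D f -> Sa f /\ D (a f)) ->
  (forall f, D f -> Sad f /\ D (ad f)) ->
  (forall f, D f -> Sb f /\ D (b f)) ->
  (forall f, D f -> Sbd f /\ D (bd f)) ->
  (forall f, D f -> a (b f) - b (a f) = f) ->
  phi0 != 0 -> D phi0 -> a phi0 = 0 ->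
  (span_phi b phi0 `<=` exp_dom Sa a gamma) /\
  ((exists (r alpha : RR), 0 < r /\ 0 <= alpha < 2^-1 /\
      forall n : nat,
        `|phi_vec b phi0 n| <= (r ^+ n * powR (n`!%:R) alpha)%:C) ->
   span_phi b phi0 `<=` exp_dom Sb b gamma).
Proof.
move=> _ DS _ aO bO _ _ Da _ Db _ ccr _ Dphi0 vacuum.
have aD := lin_op_endo aO Da.
have bD := lin_op_endo bO Db.
split.
  by apply: (span_phi_sub_exp_dom_annihilator DS aD bD ccr Dphi0 vacuum) => f /Da[].
move=> [r [alpha [r0 [alpha_bounds growth]]]].
by apply: (span_phi_sub_exp_dom_creator DS bD Dphi0 r0 alpha_bounds growth) => f /Db[].
Qed.
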